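(* (i) If $\mathbf p=\{p_1,\dots,p_n\}$ is an admissible tuple and $\mathsf P=[\partial_{c[j]}p_i]_{1\le i,j\le n}$, then $\partial_k(\mathsf P)=\gamma_k(\mathsf P)$ for all $k=1,\dots,n-1$. (ii) Conversely, let $\mathsf Q=[q_{ij}]\in\mathrm{Mat}(n,\mathbb Q[\mathbf x])$ be invertible, with each $q_{ij}$ homogeneous of degree $j-i$ (so $q_{ij}=0$ if $j<i$), and with $\partial_k(\mathsf Q)=\gamma_k(\mathsf Q)$ for $k=1,\dots,n-1$. Then the tuple $\{q_{1n},\dots,q_{nn}\}$ is admissible and $q_{ij}=\partial_{c[j]}q_{in}$ for all $i,j$.
   Context: $\mathbb Q[\mathbf x]=\mathbb Q[x_1,\dots,x_n]$ with $\deg x_i=1$; $\partial_k=(1-s_k)/(x_k-x_{k+1})$ the divided difference, applied entrywise to matrices; $c[j]=s_js_{j+1}\cdots s_{n-1}$ ($c[n]=\mathrm{id}$) and $\partial_{c[j]}=\partial_j\cdots\partial_{n-1}$. A tuple $\mathbf p=\{p_1,\dots,p_n\}\subset\mathbb Q[\mathbf x]$ is admissible if each $p_j$ is symmetric in $x_1,\dots,x_{n-1}$, homogeneous of degree $n-j$, and $\partial_{c[j]}p_j\in\mathbb Q^\times$. For a matrix $A$ with $n$ columns, $\gamma_k(A)_{ij}=\delta_{j,k+1}A_{ik}$ (the $k$-th column moved to position $k+1$, other entries zero). *)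

(* Q[x_1..x_n] is modelled as iterated univariate polynomials:
   mpoly 0 = rat, mpoly (n+1) = {poly (mpoly n)}, the outer variable being x_{n+1}. *)
From HB Require Import structures.
From mathcomp Require Import all_boot all_order all_algebra.
From Stdlib Require Import ClassicalEpsilon.
Set Implicit Arguments. Unset Strict Implicit. Unset Printing Implicit Defensive.
Import Order.TTheory GRing.Theory Num.Theory.
Local Open Scope ring_scope.

Fixpoint mpoly (n : nat) : idomainType :=
  match n with
  | 0 => rat
  | n'.+1 => {poly (mpoly n')}
  end.

(* the variable x_i (1-based, 1 <= i <= n); 0 for out-of-range indices *)
Fixpoint mvar (n : nat) (i : nat) : mpoly n :=
  match n return mpoly n with
  | 0 => 0
  | n'.+1 => if i == n'.+1 then 'X else (mvar n' i)%:P
  end.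

Fixpoint msubst (S : comUnitRingType) (v : nat -> S) (n : nat) : mpoly n -> S :=
  match n return mpoly n -> S with
  | 0 => fun c => ratr c
  | n'.+1 => fun p : {poly (mpoly n')} => (map_poly (@msubst S v n') p).[v n'.+1]
  end.

Definition sk (n k : nat) (f : mpoly n) : mpoly n :=
  msubst (fun i => mvar n (if i == k then k.+1 else if i == k.+1 then k else i)) f.

Definition dd (n k : nat) (f : mpoly n) : mpoly n :=
  epsilon (inhabits 0)
    (fun g : mpoly n => (mvar n k - mvar n k.+1) * g = f - sk k f).

(* d_{c[j]} = d_j d_{j+1} ... d_{n-1}  (identity when j = n) *)
Definition dc (n j : nat) (f : mpoly n) : mpoly n :=
  foldr (fun k g => dd k g) f (iota j (n - j)).

(* homogeneous of total degree d (0 is homogeneous of every degree) *)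
Fixpoint homog (n : nat) : nat -> mpoly n -> bool :=
  match n return nat -> mpoly n -> bool with
  | 0 => fun d c => (d == 0)%N || (c == 0)
  | n'.+1 => fun d (p : {poly (mpoly n')}) =>
      [forall i : 'I_(size p),
        if (i <= d)%N then homog (d - i) p`_i else p`_i == 0]
  end.

Definition sym_but_last (n : nat) (f : mpoly n) : Prop :=
  forall k : nat, (1 <= k)%N -> (k.+1 <= n.-1)%N -> sk k f = f.

Definition nonzero_const (n : nat) (f : mpoly n) : Prop :=
  exists c : rat, c != 0 /\ f = ratr c.

(* admissible tuple; p i (i : 'I_n, 0-based) stands for p_{i+1} *)
Definition admissible (n : nat) (p : 'I_n -> mpoly n) : Prop :=
  forall i : 'I_n,
    [/\ sym_but_last (p i), homog (n - i.+1) (p i) & nonzero_const (dc i.+1 (p i))].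

(* A_{i,m} with 1-based column index m (0 if m is out of range) *)
Definition entry1 (R : nzRingType) (m n : nat) (A : 'M[R]_(m, n)) (i : 'I_m) (c : nat) : R :=
  \sum_(l < n | l.+1 == c) A i l.

(* gamma_k(A)_{ij} = delta_{j,k+1} A_{ik}  (paper's 1-based indices) *)
Definition gamma (R : nzRingType) (m n : nat) (k : nat) (A : 'M[R]_(m, n)) : 'M[R]_(m, n) :=
  \matrix_(i, j) (if j.+1 == k.+1 then entry1 A i k else 0).

(* For f symmetric in x_1, ..., x_{n-1}, the polynomial d_{c[j]} f is s_k-invariant
   for every k <> j - 1: for k <= j - 2 because s_k commutes with d_j, ..., d_{n-1},
   and for k >= j by the braid relation s_{k+1} d_k d_{k+1} h = d_k d_{k+1} h
   (valid when s_k h = h), applied from the inside of d_j ... d_{n-1} outwards.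
   Hence d_k d_{c[j]} f equals d_{c[k]} f when j = k + 1 and vanishes otherwise,
   which is (i) entrywise.  Conversely, reading d_k Q = gamma_k(Q) column by column
   gives q_{ij} = d_j q_{i,j+1} and d_k q_{in} = 0, i.e. q_{ij} = d_{c[j]} q_{in}
   and s_k q_{in} = q_{in}; the diagonal entries are homogeneous of degree 0, hence
   rational constants, and nonzero because the triangular matrix Q is invertible. *)
From HB Require Import structures.
From mathcomp Require Import all_boot all_order all_algebra.
From mathcomp Require Import ring zify.
From Stdlib Require Import ClassicalEpsilon.
Import GRing.Theory.
Local Open Scope ring_scope.
Set Implicit Arguments. Unset Strict Implicit. Unset Printing Implicit Defensive.

Lemma mpoly_rat_rmorph n : inhabited {rmorphism rat -> mpoly n}.
Proof.
elim: n => [|n [rho]]; first by constructor; exact: idfun.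
by constructor; exact: ((@polyC (mpoly n)) \o rho).
Qed.

Lemma rmorph_ratr m (S : unitRingType) (phi : {rmorphism mpoly m -> S}) c :
  phi (ratr c) = ratr c.
Proof.
have [rho] := mpoly_rat_rmorph m.
by rewrite -(fmorph_eq_rat rho c) -[phi (rho c)]/((phi \o rho) c) fmorph_eq_rat.
Qed.

Lemma msubst_rmorph m (v : nat -> mpoly m) n :
  exists phi : {rmorphism mpoly n -> mpoly m}, @msubst _ v n =1 phi.
Proof.
elim: n => [|n [phi ephi]].
  have [rho] := mpoly_rat_rmorph m.
  by exists rho => c /=; rewrite (fmorph_eq_rat rho c).
have cfu : commr_rmorph phi (v n.+1) by move=> a; exact: mulrC.
exists (horner_morph cfu) => f /=.
by rewrite /horner_morph (eq_map_poly ephi).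
Qed.

Lemma rmorph_sub_dvd n (S : comUnitRingType) (d : S)
    (phi psi : {rmorphism mpoly n -> S}) :
  (forall i, (0 < i <= n)%N -> exists g, phi (mvar n i) - psi (mvar n i) = d * g) ->
  forall f, exists g, phi f - psi f = d * g.
Proof.
elim: n phi psi => [|n IH] phi psi Hvar f.
  by exists 0; rewrite mulr0 (fmorph_eq_rat phi) (fmorph_eq_rat psi) subrr.
have [gX eX] : exists g, phi 'X - psi 'X = d * g.
  by have := Hvar n.+1; rewrite /= eqxx leqnn; apply.
have HC c : exists g, phi c%:P - psi c%:P = d * g.
  apply: (IH (phi \o polyC) (psi \o polyC)) => i /andP[i0 iN].
  have := Hvar i; rewrite /= ifN; first by apply; rewrite i0 ltnW.
  by rewrite neq_ltn ltnS iN.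
move: f; change (forall f : {poly mpoly n}, exists g, phi f - psi f = d * g).
elim/poly_ind => [|p c [gp ep]]; first by exists 0; rewrite !rmorph0 subrr mulr0.
have [gc ec] := HC c.
exists (gp * phi 'X + psi p * gX + gc); rewrite !rmorphD !rmorphM /=.
have -> : phi p * phi 'X + phi c%:P - (psi p * psi 'X + psi c%:P)
   = (phi p - psi p) * phi 'X + psi p * (phi 'X - psi 'X) + (phi c%:P - psi c%:P)
  by ring.
by rewrite ep eX ec; ring.
Qed.

Lemma rmorph_mvar_ext n (S : comUnitRingType) (phi psi : {rmorphism mpoly n -> S}) :
  (forall i, (0 < i <= n)%N -> phi (mvar n i) = psi (mvar n i)) -> phi =1 psi.
Proof.
move=> Hvar f; have [|g] := rmorph_sub_dvd (d := 0) (phi := phi) (psi := psi) _ f.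
  by move=> i /Hvar ->; exists 0; rewrite subrr mulr0.
by rewrite mul0r => /eqP; rewrite subr_eq0 => /eqP.
Qed.

Lemma msubst_mvar m (v : nat -> mpoly m) n i :
  (0 < i <= n)%N -> msubst v (mvar n i) = v i.
Proof.
elim: n => [|n IH] /andP[i0 iN]; first by move: i0 iN; case: i.
have [phi ephi] := msubst_rmorph v n.
rewrite /=; case: eqP => [->|ne].
  by rewrite /= (eq_map_poly ephi) map_polyX hornerX.
rewrite /= (eq_map_poly ephi) map_polyC hornerC; apply: etrans (esym (ephi _)) _.
by rewrite IH // i0 -ltnS ltn_neqAle iN andbT; apply/eqP.
Qed.

Lemma eq_msubst m (v w : nat -> mpoly m) n (f : mpoly n) :
  (forall i, (0 < i <= n)%N -> v i = w i) -> msubst v f = msubst w f.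
Proof.
move=> Hvw; have [phi ephi] := msubst_rmorph v n; have [psi epsi] := msubst_rmorph w n.
rewrite ephi epsi; apply: rmorph_mvar_ext => i hi.
by rewrite -ephi -epsi !msubst_mvar // Hvw.
Qed.

Lemma msubst_mvar_id n (f : mpoly n) : msubst (mvar n) f = f.
Proof.
have [phi ephi] := msubst_rmorph (mvar n) n.
rewrite ephi; apply: (rmorph_mvar_ext (psi := idfun)) => i hi.
by rewrite -ephi msubst_mvar.
Qed.

Lemma msubst_comp n (v w : nat -> mpoly n) (f : mpoly n) :
  msubst w (msubst v f) = msubst (fun i => msubst w (v i)) f.
Proof.
have [phi ephi] := msubst_rmorph v n; have [psi epsi] := msubst_rmorph w n.
have [chi echi] := msubst_rmorph (fun i => msubst w (v i)) n.
rewrite ephi epsi echi; apply: (rmorph_mvar_ext (phi := psi \o phi)) => i hi.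
by rewrite /= -ephi -epsi -echi !msubst_mvar.
Qed.

Lemma mvar_sub_neq0 n a b : (0 < a <= n)%N -> (0 < b <= n)%N -> a != b ->
  mvar n a - mvar n b != 0.
Proof.
elim: n a b => [|n IH] a b; first by case/andP=> a0; case: a a0.
wlog le_ab : a b / (a <= b)%N.
  move=> W ha hb ne; case: (leqP a b) => [le|lt]; first exact: W.
  by rewrite -opprB oppr_eq0 W // 1?eq_sym // ltnW.
move=> /andP[a0 aN] /andP[b0 bN] ne.
have an : a != n.+1 by apply: contra ne => /eqP e; apply/eqP; lia.
rewrite /= (negbTE an); case: (b =P n.+1) => [_|nb].
  by rewrite -opprB oppr_eq0 -size_poly_eq0 size_XsubC.
rewrite -polyCB polyC_eq0 IH // ?a0 ?b0 /= -ltnS ltn_neqAle ?aN ?bN ?an //.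
by rewrite andbT; apply/eqP.
Qed.

Definition transp_nat (k i : nat) : nat :=
  if i == k then k.+1 else if i == k.+1 then k else i.

Ltac no_if t := lazymatch t with context[if _ then _ else _] => fail | _ => idtac end.
Ltac transp_nat_lia := rewrite /transp_nat;
  repeat (match goal with |- context[if ?a == ?b then _ else _] =>
     no_if a; no_if b; case: (a =P b) => ? end; simpl); lia.

Lemma skE n k (f : mpoly n) : sk k f = msubst (fun i => mvar n (transp_nat k i)) f.
Proof. by []. Qed.

Lemma sk_rmorph n k : exists phi : {rmorphism mpoly n -> mpoly n}, @sk n k =1 phi.
Proof. exact: msubst_rmorph. Qed.

Lemma skM n k (x y : mpoly n) : sk k (x * y) = sk k x * sk k y.
Proof. by have [phi e] := sk_rmorph n k; rewrite !e rmorphM. Qed.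

Lemma skB n k (x y : mpoly n) : sk k (x - y) = sk k x - sk k y.
Proof. by have [phi e] := sk_rmorph n k; rewrite !e rmorphB. Qed.

Lemma sk_mvar n k i : (0 < i <= n)%N -> sk k (mvar n i) = mvar n (transp_nat k i).
Proof. by move=> hi; rewrite skE msubst_mvar. Qed.

Lemma msubst_mvar_comp n (s t : nat -> nat) (f : mpoly n) :
  (forall i, (0 < i <= n)%N -> (0 < t i <= n)%N) ->
  msubst (fun i => mvar n (s i)) (msubst (fun i => mvar n (t i)) f)
  = msubst (fun i => mvar n (s (t i))) f.
Proof. by move=> Ht; rewrite msubst_comp; apply: eq_msubst => i hi; rewrite msubst_mvar ?Ht. Qed.

Lemma transp_nat_range n k i : (0 < k)%N -> (k < n)%N -> (0 < i <= n)%N ->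
  (0 < transp_nat k i <= n)%N.
Proof. rewrite /transp_nat => k0 kn /andP[i0 iN]; repeat case: ifP => /eqP ?; lia. Qed.

Lemma skK n k (f : mpoly n) : (0 < k)%N -> (k < n)%N -> sk k (sk k f) = f.
Proof.
move=> k0 kn; rewrite !skE msubst_mvar_comp; last by move=> i; apply: transp_nat_range.
by rewrite -[RHS]msubst_mvar_id; apply: eq_msubst => i _; congr (mvar n _); transp_nat_lia.
Qed.

Lemma skC n k m (f : mpoly n) : (0 < k)%N -> (k.+1 < m)%N -> (m < n)%N ->
  sk k (sk m f) = sk m (sk k f).
Proof.
move=> k0 km mn; rewrite !skE !msubst_mvar_comp; first last.
- by move=> i hi; apply: transp_nat_range => //; lia.
- by move=> i hi; apply: transp_nat_range => //; lia.
by apply: eq_msubst => i _; congr (mvar n _); transp_nat_lia.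
Qed.

Lemma sk_braid n j (f : mpoly n) : (0 < j)%N -> (j.+2 <= n)%N ->
  sk j (sk j.+1 (sk j f)) = sk j.+1 (sk j (sk j.+1 f)).
Proof.
move=> j0 jn; rewrite !skE !msubst_mvar_comp => [|i hi|i hi|i hi|i hi];
  try by do ?apply: transp_nat_range; lia.
by apply: eq_msubst => i _; congr (mvar n _); transp_nat_lia.
Qed.

Section DividedDifference.

Variables (n k : nat).
Hypotheses (k_gt0 : (0 < k)%N) (k_lt_n : (k < n)%N).

Let root_neq0 : mvar n k - mvar n k.+1 != 0.
Proof. by apply: mvar_sub_neq0; [lia|lia|rewrite neq_ltn ltnSn]. Qed.

Lemma mul_dd (f : mpoly n) : (mvar n k - mvar n k.+1) * dd k f = f - sk k f.
Proof.
rewrite /dd; apply: (epsilon_spec (inhabits 0) (fun g : mpoly n => _ * g = _)).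
have [phi ephi] := sk_rmorph n k.
have [|g eg] := rmorph_sub_dvd (d := mvar n k - mvar n k.+1) (phi := idfun) (psi := phi) _ f.
  move=> i hi /=; rewrite -ephi sk_mvar // /transp_nat.
  case: (i =P k) => [->|_]; first by exists 1; rewrite mulr1.
  case: (i =P k.+1) => [->|_]; first by exists (-1); rewrite mulrN1 opprB.
  by exists 0; rewrite subrr mulr0.
by exists g; rewrite -eg ephi.
Qed.

Lemma ddE (f g : mpoly n) :
  (mvar n k - mvar n k.+1) * g = f - sk k f -> dd k f = g.
Proof. by move=> e; apply: (mulfI root_neq0); rewrite mul_dd. Qed.

Lemma dd_eq0 (f : mpoly n) : dd k f = 0 <-> sk k f = f.
Proof.
split=> [f0|sf]; last by apply: ddE; rewrite sf subrr mulr0.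
by apply/esym/eqP; rewrite -subr_eq0 -mul_dd f0 mulr0.
Qed.

Lemma sk_dd (f : mpoly n) : sk k (dd k f) = dd k f.
Proof.
apply: (mulfI root_neq0); apply: oppr_inj.
have sk_root : sk k (mvar n k - mvar n k.+1) = - (mvar n k - mvar n k.+1).
  rewrite skB !sk_mvar ?opprB; try lia.
  by congr (mvar n _ - mvar n _); transp_nat_lia.
by rewrite -mulNr -sk_root -skM mul_dd skB skK // opprB.
Qed.

End DividedDifference.

Lemma sk_dd_far n k m (f : mpoly n) : (0 < k)%N -> (k < n)%N -> (0 < m)%N -> (m < n)%N ->
  (k.+1 < m)%N || (m.+1 < k)%N -> sk k (dd m f) = dd m (sk k f).
Proof.
move=> k0 kn m0 mn far; symmetry; apply: ddE => //.
have sk_root : sk k (mvar n m - mvar n m.+1) = mvar n m - mvar n m.+1.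
  rewrite skB !sk_mvar; try lia.
  by congr (mvar n _ - mvar n _); transp_nat_lia.
rewrite -sk_root -skM mul_dd // skB.
by case/orP: far => far; [rewrite skC | rewrite (skC f (k := m) (m := k))].
Qed.

(* The braid relation for divided differences with denominators cleared, where
   a, b, c stand for x_j, x_{j+1}, x_{j+2} and h is s_j-invariant. *)
Lemma braid_dd_identity (R : comPzRingType) (a b c h h2 h12 u u1 v v2 u2 u21 : R) :
  (b - c) * u = h - h2 -> (a - c) * u1 = h - h12 -> (a - b) * v = u - u1 ->
  (a - c) * v2 = u2 - u21 -> (c - b) * u2 = h2 - h -> (a - b) * u21 = h2 - h12 ->
  (a - b) * (b - c) * (a - c) * v2 = (a - b) * (b - c) * (a - c) * v.
Proof.
move=> E1 E2 E3 E4 E5 E6; apply/eqP; rewrite -subr_eq0; apply/eqP.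
transitivity ((a-b)*(b-c)*((a-c)*v2 - (u2 - u21)) - (a-b)*((c-b)*u2 - (h2 - h))
  - (b-c)*((a-b)*u21 - (h2-h12)) - (b-c)*(a-c)*((a-b)*v - (u-u1))
  - (a-c)*((b-c)*u - (h-h2)) + (b-c)*((a-c)*u1 - (h-h12))); first by ring.
by rewrite E1 E2 E3 E4 E5 E6 !subrr; ring.
Qed.

Lemma sk_dd_dd_braid n j (h : mpoly n) : (0 < j)%N -> (j.+2 <= n)%N -> sk j h = h ->
  sk j.+1 (dd j (dd j.+1 h)) = dd j (dd j.+1 h).
Proof.
move=> j0 jn hs.
set u := dd j.+1 h; set v := dd j u.
set a := mvar n j; set b := mvar n j.+1; set c := mvar n j.+2.
have s1a : sk j a = b by rewrite /a sk_mvar; [congr (mvar n _); transp_nat_lia|lia].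
have s1b : sk j b = a by rewrite /b sk_mvar; [congr (mvar n _); transp_nat_lia|lia].
have s1c : sk j c = c by rewrite /c sk_mvar; [congr (mvar n _); transp_nat_lia|lia].
have s2a : sk j.+1 a = a by rewrite /a sk_mvar; [congr (mvar n _); transp_nat_lia|lia].
have s2b : sk j.+1 b = c by rewrite /b sk_mvar; [congr (mvar n _); transp_nat_lia|lia].
have s2c : sk j.+1 c = b by rewrite /c sk_mvar; [congr (mvar n _); transp_nat_lia|lia].
have E1 : (b - c) * u = h - sk j.+1 h by rewrite /u mul_dd //; lia.
have E2 : (a - c) * sk j u = h - sk j (sk j.+1 h).
  by rewrite -s1b -s1c -skB -skM E1 skB hs.
have E3 : (a - b) * v = u - sk j u by rewrite /v mul_dd //; lia.
have E4 : (a - c) * sk j.+1 v = sk j.+1 u - sk j.+1 (sk j u).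
  by rewrite -s2a -s2b -skB -skM E3 skB.
have E5 : (c - b) * sk j.+1 u = sk j.+1 h - h.
  have -> : c - b = sk j.+1 (b - c) by rewrite skB s2b s2c.
  by rewrite -skM E1 skB skK //; lia.
have E6 : (a - b) * sk j.+1 (sk j u) = sk j.+1 h - sk j (sk j.+1 h).
  by rewrite -s2a -s2c -skB -skM E2 skB -sk_braid // hs.
have nz : (a - b) * (b - c) * (a - c) != 0.
  rewrite !mulf_neq0 // /a /b /c; apply: mvar_sub_neq0; try lia;
  by rewrite neq_ltn ltnS ?leqnn ?ltnSn ?orbT ?leqnSn.
exact: (mulfI nz) (braid_dd_identity E1 E2 E3 E4 E5 E6).
Qed.

Lemma dcnn n (f : mpoly n) : dc n f = f.
Proof. by rewrite /dc subnn. Qed.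

Lemma dcS n j (f : mpoly n) : (j < n)%N -> dc j f = dd j (dc j.+1 f).
Proof. by move=> jn; rewrite /dc; have -> : (n - j = (n - j.+1).+1)%N by lia. Qed.

Section DividedDifferenceOfSymmetric.

Variables (n : nat) (f : mpoly n).
Hypothesis f_sym : sym_but_last f.

Lemma sk_dc_low k j : (0 < k)%N -> (k.+2 <= j)%N -> (j <= n)%N -> sk k (dc j f) = dc j f.
Proof.
move=> k0; move Hd : (n - j)%N => d; elim: d j Hd => [|d IH] j Hd kj jn.
  have -> : j = n by lia.
  by rewrite dcnn f_sym //; lia.
by rewrite dcS; last lia; rewrite sk_dd_far ?IH //; lia.
Qed.

Lemma sk_dc_high k j : (0 < j)%N -> (j <= k)%N -> (k < n)%N -> sk k (dc j f) = dc j f.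
Proof.
move=> j0; move Hd : (n - j)%N => d; elim: d j j0 Hd => [|d IH] j j0 Hd jk kn; first lia.
rewrite dcS; last lia.
case: (ltngtP k j.+1) => hk.
- have -> : k = j by lia.
  by rewrite sk_dd //; lia.
- by rewrite sk_dd_far ?IH //; lia.
- rewrite -hk in kn *; rewrite dcS; last lia.
  by rewrite hk; apply: sk_dd_dd_braid; try lia; apply: sk_dc_low; lia.
Qed.

Lemma dd_dc k j : (0 < k)%N -> (k < n)%N -> (0 < j <= n)%N ->
  dd k (dc j f) = if j == k.+1 then dc k f else 0.
Proof.
move=> k0 kn /andP[j0 jn]; case: eqP => [->|nj]; first by rewrite [dc k f]dcS.
apply/dd_eq0 => //; case: (ltnP k j) => hj; last exact: sk_dc_high.
by apply: sk_dc_low => //; lia.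
Qed.

End DividedDifferenceOfSymmetric.

Lemma homog0_ratr n (f : mpoly n) : homog 0 f -> exists c, f = ratr c.
Proof.
elim: n f => [|n IH] f; first by exists f; rewrite -(fmorph_eq_rat idfun f).
change {poly mpoly n} in f; move=> /= /forallP homf.
have sf : (size f <= 1)%N.
  rewrite leqNgt; apply/negP => s2.
  have lt : ((size f).-1 < size f)%N by rewrite prednK //; lia.
  have := homf (Ordinal lt); rewrite /= ifN; last by rewrite -ltnNge -ltnS prednK // ltnW.
  by rewrite -lead_coefE lead_coef_eq0 -size_poly_eq0; lia.
case: (posnP (size f)) => [/eqP|s0].
  by rewrite size_poly_eq0 => /eqP ->; exists 0; rewrite (ratr_nat _ 0).
have [c ec] := IH _ (homf (Ordinal s0)).
by exists c; rewrite [f]size1_polyC // ec (rmorph_ratr (@polyC (mpoly n))).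
Qed.

Lemma unitmx_upper_trig_diag (R : comUnitRingType) m (A : 'M[R]_m) :
  (forall i j : 'I_m, (j < i)%N -> A i j = 0) -> A \in unitmx ->
  forall i, A i i \is a GRing.unit.
Proof.
move=> Aup; rewrite unitmxE -det_tr det_trig; last first.
  by apply/is_trig_mxP => i j ij; rewrite mxE Aup.
by move=> /unitr_prodP Adiag i; have := Adiag i (mem_index_enum i) isT; rewrite mxE.
Qed.

Lemma entry1E (R : nzRingType) m p (A : 'M[R]_(m, p)) i c (hc : (c.-1 < p)%N) :
  (0 < c)%N -> entry1 A i c = A i (Ordinal hc).
Proof.
move=> c0; rewrite /entry1 (big_pred1 (Ordinal hc)) // => l /=.
apply/eqP/eqP => [e|->]; first by apply: val_inj; rewrite /= -e.
by rewrite /= prednK.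
Qed.

Section DividedDifferenceEquations.

Variables (n : nat) (Q : 'M[mpoly n]_n).
Hypothesis dd_Q : forall k, (1 <= k)%N -> (k <= n.-1)%N -> map_mx (dd k) Q = gamma k Q.

Lemma dd_next_col i (j : 'I_n) (hj : (j.+1 < n)%N) : dd j.+1 (Q i (Ordinal hj)) = Q i j.
Proof.
have jn : (j.+1 <= n.-1)%N by lia.
have := congr1 (fun M : 'M_n => M i (Ordinal hj)) (dd_Q (ltn0Sn j) jn).
rewrite !mxE /= eqxx (@entry1E _ _ _ Q i j.+1 (ltn_ord j)) //.
by have -> : Ordinal (ltn_ord j) = j by apply: ord_inj.
Qed.

Lemma dd_other_col i (j : 'I_n) k : (0 < k)%N -> (k < n)%N -> j != k :> nat ->
  dd k (Q i j) = 0.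
Proof.
move=> k0 kn jk; have kn' : (k <= n.-1)%N by lia.
have := congr1 (fun M : 'M_n => M i j) (dd_Q k0 kn').
by rewrite !mxE eqSS (negbTE jk).
Qed.

Lemma col_dc_last (last : 'I_n) : last.+1 = n -> forall i j : 'I_n, Q i j = dc j.+1 (Q i last).
Proof.
move=> hl i j; move Hd : (n - j.+1)%N => d; elim: d j Hd => [|d IH] j Hd.
  have -> : j = last by apply: ord_inj; have := ltn_ord j; lia.
  by rewrite hl dcnn.
have hj : (j.+1 < n)%N by lia.
by rewrite dcS // -(IH (Ordinal hj)) ?dd_next_col //=; lia.
Qed.

End DividedDifferenceEquations.

Theorem lemma4p1 (n : nat) :
  (* (i) *)
  (forall p : 'I_n -> mpoly n, admissible p ->
     let P : 'M[mpoly n]_n := \matrix_(i, j) dc j.+1 (p i) in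
     forall k : nat, (1 <= k)%N -> (k <= n.-1)%N ->
       map_mx (dd k) P = gamma k P)
  /\
  (* (ii) *)
  (forall Q : 'M[mpoly n]_n,
     Q \in unitmx ->
     (forall i j : 'I_n,
        if (i <= j)%N then homog (j - i) (Q i j) else Q i j == 0) ->
     (forall k : nat, (1 <= k)%N -> (k <= n.-1)%N ->
        map_mx (dd k) Q = gamma k Q) ->
     forall last : 'I_n, last.+1 = n ->
       admissible (fun i => Q i last) /\
       (forall i j : 'I_n, Q i j = dc j.+1 (Q i last))).
Proof.
split.
  move=> p adm P k k1 kn; apply/matrixP => i j; rewrite !mxE.
  have [p_sym _ _] := adm i.
  have kn' : (k < n)%N by lia.
  rewrite dd_dc //; last by rewrite /= ltn_ord.
  case: ifP => // _.
  have hk : (k.-1 < n)%N by lia.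
  by rewrite (entry1E _ _ hk) // mxE /= prednK.
move=> Q Qunit Qhomog dd_Q last hl; have Qcol := col_dc_last dd_Q hl.
split=> // i; split.
- move=> k k1 kn; have kn' : (k < n)%N by lia.
  by apply/dd_eq0/dd_other_col => //; apply/eqP; lia.
- have ilast : (i <= last)%N by rewrite -ltnS hl.
  have -> : (n - i.+1 = last - i)%N by lia.
  by have := Qhomog i last; rewrite ilast.
- rewrite -Qcol; have := Qhomog i i; rewrite leqnn subnn => /homog0_ratr [c ec].
  exists c; split=> //; apply/eqP => c0.
  have Qup (j l : 'I_n) : (l < j)%N -> Q j l = 0.
    by move=> lj; have := Qhomog j l; rewrite leqNgt lj => /eqP.
  by have := unitmx_upper_trig_diag Qup Qunit i; rewrite ec c0 (ratr_nat _ 0) unitr0.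
Qed.
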